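(* For the erased fair coin flips source with erasure probability $\delta$ and any $(d_s,d_x)\in\mathcal D_2\cup\mathcal D_3$, for every blocklength $k$ and positive integer $M$ there exists a $(k,M,d_s,d_x,\epsilon)$ code such that \[\epsilon\le\sum_{t=0}^k\mathsf{binopmf}(t;k,\delta)\sum_{i=0}^t\mathsf{binopmf}(i;t,1/2)\Big(1-\mathsf{binocdf}\big(\min\{\lfloor kd_s\rfloor-i,\ \lfloor kd_x\rfloor-t\};k-t,1/2\big)\Big)^M.\]
   Context: Erased fair coin flips (EFCF): $S$ uniform on $\{0,1\}$; $X\in\{0,1,e\}$ equals $S$ with probability $1-\delta$ and $e$ with probability $\delta$; blocks $(S^k,X^k)$ have i.i.d. components. Reconstructions $z^k\in\{0,1\}^k$, $y^k\in\{0,1,e\}^k$ with normalized Hamming distortions $\mathsf d_s(s^k,z^k)=\frac1k\sum_i1\{s_i\ne z_i\}$, $\mathsf d_x(x^k,y^k)=\frac1k\sum_i1\{x_i\ne y_i\}$. A $(k,M,d_s,d_x,\epsilon)$ code is a random encoder $P_{U|X^k}$ into $\{1,\dots,M\}$ and a random decoder $P_{Z^kY^k|U}$ with $\mathbb P[\mathsf d_s(S^k,Z^k)>d_s\text{ or }\mathsf d_x(X^k,Y^k)>d_x]\le\epsilon$. Regions: $\mathcal D_2=\{2\delta\le d_x\le1/2+\delta/2,\ d_s\ge d_x-\delta/2\}$, $\mathcal D_3=\{d_x\ge d_s+\delta/2,\ \delta/2\le d_s\le1/2\}$. $\mathsf{binopmf}(\cdot;n,p)$ and $\mathsf{binocdf}(\cdot;n,p)$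 are the pmf and cdf of the Binomial$(n,p)$ distribution (cdf zero at negative arguments). *)

From HB Require Import structures.
From mathcomp Require Import all_boot all_order all_algebra.
Set Implicit Arguments. Unset Strict Implicit. Unset Printing Implicit Defensive.
Import Order.TTheory GRing.Theory Num.Theory.
Local Open Scope ring_scope.

Section EFCF.
Variable R : archiRealFieldType.

(* Erasure alphabet {0,1,e}: Some b = bit b, None = erasure e. *)
Definition xsym := option bool.

Definition binopmf (t n : nat) (p : R) : R := 'C(n, t)%:R * p ^+ t * (1 - p) ^+ (n - t).
Definition binocdf (m : int) (n : nat) (p : R) : R :=
  if m < 0 then 0 else \sum_(j < (`|m|%N).+1) binopmf j n p.

Variable k : nat.

(* Single-letter joint pmf of (S,X): S uniform, X = S w.p. 1-delta, e w.p. delta. *)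
Definition efcf_pmf1 (delta : R) (s : bool) (x : xsym) : R :=
  (1 / 2) * (match x with Some b => if b == s then 1 - delta else 0 | None => delta end).

Definition efcf_pmf (delta : R) (s : {ffun 'I_k -> bool}) (x : {ffun 'I_k -> xsym}) : R :=
  \prod_(i < k) efcf_pmf1 delta (s i) (x i).

Definition dist_s (s z : {ffun 'I_k -> bool}) : R := #|[set i | s i != z i]|%:R / k%:R.
Definition dist_x (x y : {ffun 'I_k -> xsym}) : R := #|[set i | x i != y i]|%:R / k%:R.

Variable M : nat.

(* Random encoder P_{U|X^k} into 'I_M (= {1,...,M}) : a stochastic kernel. *)
Definition is_encoder (enc : {ffun 'I_k -> xsym} -> 'I_M -> R) :=
  forall x, (forall u, 0 <= enc x u) /\ \sum_(u < M) enc x u = 1.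

Definition is_decoder
  (dec : 'I_M -> {ffun 'I_k -> bool} * {ffun 'I_k -> xsym} -> R) :=
  forall u, (forall zy, 0 <= dec u zy) /\ \sum_(zy : {ffun 'I_k -> bool} * {ffun 'I_k -> xsym}) dec u zy = 1.

Definition excess_prob (delta ds dx : R)
  (enc : {ffun 'I_k -> xsym} -> 'I_M -> R)
  (dec : 'I_M -> {ffun 'I_k -> bool} * {ffun 'I_k -> xsym} -> R) : R :=
  \sum_(s : {ffun 'I_k -> bool}) \sum_(x : {ffun 'I_k -> xsym}) \sum_(u < M)
   \sum_(zy : {ffun 'I_k -> bool} * {ffun 'I_k -> xsym})
     efcf_pmf delta s x * enc x u * dec u zy *
     (if (ds < dist_s s zy.1) || (dx < dist_x x zy.2) then 1 else 0).

Definition is_code (delta ds dx eps : R) :=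
  exists enc dec, [/\ is_encoder enc, is_decoder dec & excess_prob delta ds dx enc dec <= eps].

End EFCF.

Definition region_D2 (R : archiRealFieldType) (delta ds dx : R) : Prop :=
  [/\ 2 * delta <= dx, dx <= 1 / 2 + delta / 2 & dx - delta / 2 <= ds].
Definition region_D3 (R : archiRealFieldType) (delta ds dx : R) : Prop :=
  [/\ ds + delta / 2 <= dx, delta / 2 <= ds & ds <= 1 / 2].

From HB Require Import structures.
From mathcomp Require Import all_boot all_order all_algebra zify ring lra.
Import Order.TTheory GRing.Theory Num.Theory.
Local Open Scope ring_scope.
Set Implicit Arguments. Unset Strict Implicit. Unset Printing Implicit Defensive.

(* Random coding.  Encode x by the first codeword of a codebook C of M binary words that
   disagrees with x in the fewest positions (an erasure disagrees with everything) and decode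
   to that codeword.  Fix the source s and the erased set E, |E| = t.  Over a uniform random
   codeword the errors a on E and g off E are independent binomials, and the encoder only
   sees g; so the chosen codeword still has a ~ Binomial(t, 1/2), while its g is the minimum
   of M independent Binomial(k - t, 1/2).  Decoding fails iff min(fs - a, fx - t) < g, with
   fs, fx the floors of k ds and k dx, hence the bound is exactly the error probability
   averaged over all codebooks, and some codebook does no worse than the average. *)

Lemma cardsC_sub (T : finType) (A : {set T}) : #|~: A| = (#|T| - #|A|)%N.
Proof. by rewrite -(cardsC A) addKn. Qed.

Section Sums.
Variable R : archiRealFieldType.

Lemma sum_subsets_card (I : finType) (B : {set I}) (f : nat -> R) :
  \sum_(A : {set I} | A \subset B) f #|A| = \sum_(a < #|B|.+1) 'C(#|B|, a)%:R * f a.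
Proof.
pose size_of (A : {set I}) : 'I_#|B|.+1 := inord #|A|.
rewrite (partition_big size_of xpredT) //=; apply: eq_bigr => a _.
have size_ofE (A : {set I}) : A \subset B -> (size_of A == a) = (#|A| == a).
  by move=> sAB; rewrite -val_eqE /= inordK // ltnS subset_leq_card.
rewrite (eq_bigr (fun=> f a)); last first.
  by move=> A /andP[sAB]; rewrite size_ofE // => /eqP ->.
rewrite sumr_const -cards_draws mulr_natl; congr (_ *+ _); apply: eq_card => A.
rewrite inE -[LHS]/((A \subset B) && (size_of A == a)).
by have [/size_ofE ->|] := boolP (A \subset B).
Qed.

Lemma sum_sets_card (I : finType) (f : nat -> R) :
  \sum_(A : {set I}) f #|A| = \sum_(a < #|I|.+1) 'C(#|I|, a)%:R * f a.
Proof.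
rewrite -cardsT -sum_subsets_card.
by apply: eq_bigl => A; rewrite subsetT.
Qed.

Lemma telescope_above (f : int -> R) (L : int) (n : nat) :
  (forall z, z <= 0 -> f z = f 0) -> (forall z, n%:Z <= z -> f z = 0) ->
  \sum_(j < n) (L < j%:Z)%R%:R * (f j%:Z - f (j%:Z + 1)) = f (L + 1).
Proof.
move=> f_low f_high.
suff -> : \sum_(j < n) (L < j%:Z)%R%:R * (f j%:Z - f (j%:Z + 1)) =
          f (Num.min (L + 1) n%:Z) - f n%:Z.
  by rewrite [f n%:Z]f_high // subr0; case: leP => // /ltW h; rewrite !f_high.
elim: n {f_high} => [|n IH].
  by rewrite big_ord0 f_low ?subrr // ge_min lexx orbT.
rewrite big_ord_recr /= IH.
have -> : n.+1%:Z = n%:Z + 1 by lia.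
have [Ln|nL] := ltP L n%:Z.
  by rewrite mul1r !(min_idPl _) ?addrA ?subrK // ?lerD2r; lia.
by rewrite mul0r addr0 !(min_idPr _) ?subrr // ?lerD2r; lia.
Qed.

Lemma exists_le_mean (T : finType) (x0 : T) (F : T -> R) (b : R) :
  \sum_x F x = #|T|%:R * b -> exists x, F x <= b.
Proof.
move=> sum_eq; have [/existsP[x le_x]|/existsPn gt_b] := boolP [exists x, F x <= b].
  by exists x.
suff : \sum_(x : T) b < \sum_x F x.
  by rewrite sumr_const -mulr_natl sum_eq (eq_card (B := T)) ?ltxx.
apply: ltr_sum => [|x _]; last by rewrite ltNge gt_b.
by apply/hasP; exists x0; rewrite ?mem_index_enum.
Qed.

Lemma prod_ord_neq_split M (u : 'I_M) (a b : R) :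
  \prod_(v < M | v != u) (if (v < u)%N then a else b) = a ^+ u * b ^+ (M.-1 - u).
Proof.
pose F (w : nat) := if w == u then 1 else if (w < u)%N then a else b.
rewrite big_mkcond (eq_bigr (F \o val)) => [|v _]; last by rewrite /F /= -val_eqE; case: eqP.
have uM := ltn_ord u.
rewrite -(big_mkord xpredT F) (@big_cat_nat _ _ _ u) ?(ltnW uM) //=.
rewrite [X in _ * X]big_ltn // {2}/F eqxx mul1r.
rewrite (eq_big_nat _ _ (F2 := fun _ => a)) => [|i /andP[_ lt_iu]]; last first.
  by rewrite /F ltn_eqF // lt_iu.
rewrite (eq_big_nat _ _ (F2 := fun _ => b) (m := u.+1)) => [|i /andP[lt_ui _]]; last first.
  by rewrite /F gtn_eqF // ltnNge ltnW.
by rewrite !prodr_const_nat subn0; congr (_ * _ ^+ _); lia.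
Qed.

End Sums.

Section BestCodeword.
Variables (R : archiRealFieldType) (T : finType) (M : nat) (J : T -> nat).
Hypothesis M_gt0 : (0 < M)%N.

(* Keying by (J, index) makes the minimiser unique: the first codeword of least J. *)
Definition best_key (C : {ffun 'I_M -> T}) (u : 'I_M) : nat := J (C u) * M + u.

Definition best_index (C : {ffun 'I_M -> T}) : 'I_M :=
  [arg min_(u < Ordinal M_gt0) best_key C u].

Definition count_ge (b : nat) : R := \sum_c (b <= J c)%:R.

Lemma best_key_inj C : injective (best_key C).
Proof.
move=> u v /(congr1 (modn^~ M)); rewrite /best_key !modnMDl !modn_small //.
exact: val_inj.
Qed.

Lemma ltn_best_key C u v : v != u ->
  (best_key C u < best_key C v)%N =
  (if (v < u)%N then J (C u) < J (C v) else J (C u) <= J (C v))%N.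
Proof.
move=> /negP neq_vu; rewrite /best_key; have uM := ltn_ord u; have vM := ltn_ord v.
have neq_vu' : (v : nat) <> u by move=> e; apply/neq_vu/eqP/val_inj.
have [lt|ge] := ltnP (J (C u)) (J (C v)).
  have : (J (C u) * M + M <= J (C v) * M)%N by rewrite -mulSnr leq_mul2r lt orbT.
  by case: ifP => _ h; apply/idP/idP; lia.
have [eq|gt] := eqVneq (J (C u)) (J (C v)).
  by rewrite eq; case: ifP => vu; apply/idP/idP; lia.
have lt : (J (C v) < J (C u))%N by rewrite ltn_neqAle eq_sym gt ge.
have : (J (C v) * M + M <= J (C u) * M)%N by rewrite -mulSnr leq_mul2r lt orbT.
by case: ifP => _ h; apply/idP/idP; lia.
Qed.

Lemma best_indexP C u : (best_index C == u) =
  [forall v, (v != u) ==> (if (v < u)%N then J (C u) < J (C v) else J (C u) <= J (C v))%N].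
Proof.
rewrite /best_index; case: arg_minnP => // w _ w_min.
apply/eqP/forallP => [<- v|u_min].
  apply/implyP => neq_v; rewrite -ltn_best_key // ltn_neqAle w_min // andbT.
  by apply: contra neq_v => /eqP/best_key_inj ->.
apply/eqP; apply: contraT => neq_w.
have := implyP (u_min w) neq_w; rewrite -ltn_best_key // ltnNge.
by rewrite w_min.
Qed.

Lemma sum_best_codeword_levels (phi : T -> R) n : (forall c, J c < n)%N ->
  \sum_(C : {ffun 'I_M -> T}) phi (C (best_index C)) =
  \sum_(b < n) (\sum_c (J c == b)%:R * phi c) *
     \sum_(u < M) count_ge b.+1 ^+ u * count_ge b ^+ (M.-1 - u).
Proof.
move=> J_lt.
pose w (u : 'I_M) (b : nat) (v : 'I_M) (c : T) : R :=
  if v == u then (J c == b)%:R * phi c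
  else ((if (v < u)%N then b < J c else b <= J c)%N)%:R.
have w_prod (C : {ffun 'I_M -> T}) u b : \prod_v w u b v (C v) =
    ((best_index C == u) && (J (C u) == b))%:R * phi (C u).
  rewrite (bigD1 u) //= {1}/w eqxx.
  have [<-|_] := eqVneq (J (C u)) b; last by rewrite andbF !mul0r.
  rewrite /= mulr1n mul1r andbT mulrC; congr (_ * _).
  case: (boolP (best_index C == u)); rewrite best_indexP.
    move=> /forallP u_min; apply: big1 => v neq_vu.
    by rewrite /w (negbTE neq_vu) (implyP (u_min v) neq_vu).
  move=> /forallPn[v]; rewrite negb_imply => /andP[neq_vu not_min].
  by rewrite (bigD1 v) //= /w (negbTE neq_vu) (negbTE not_min) mul0r.
transitivity (\sum_(C : {ffun 'I_M -> T}) \sum_(u < M) \sum_(b < n) \prod_v w u b v (C v)).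
  apply: eq_bigr => C _; under eq_bigr do under eq_bigr do rewrite w_prod.
  rewrite (bigD1 (best_index C)) //= [X in _ + X]big1 ?addr0 => [|u neq_u]; last first.
    by apply: big1 => b _; rewrite eq_sym (negbTE neq_u) mul0r.
  rewrite (bigD1 (Ordinal (J_lt (C (best_index C))))) //= !eqxx /= mulr1n mul1r.
  rewrite [X in _ + X]big1 ?addr0 // => b neq_b; rewrite (_ : (_ == _) = false) ?mul0r //.
  by apply: contraNF neq_b => /eqP e; apply/eqP/val_inj.
rewrite exchange_big /=; under eq_bigr do rewrite exchange_big /=.
under eq_bigr do under eq_bigr do rewrite -bigA_distr_bigA /=.
under [RHS]eq_bigr do rewrite big_distrr /=.
rewrite [RHS]exchange_big /=; apply: eq_bigr => u _; apply: eq_bigr => b _.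
rewrite (bigD1 u) //= {1}/w eqxx -prod_ord_neq_split; congr (_ * _).
by apply: eq_bigr => v neq_vu; rewrite /w (negbTE neq_vu) /count_ge; case: ifP.
Qed.

(* [w b] is the mean of [phi] over the level set [J = b] (when it is nonempty). *)
Lemma sum_best_codeword (phi : T -> R) (w : nat -> R) n :
  (forall c, J c < n)%N ->
  (forall b, \sum_c (J c == b)%:R * phi c = w b * (count_ge b - count_ge b.+1)) ->
  \sum_(C : {ffun 'I_M -> T}) phi (C (best_index C)) =
  \sum_(b < n) w b * (count_ge b ^+ M - count_ge b.+1 ^+ M).
Proof.
move=> J_lt level_sum; rewrite (sum_best_codeword_levels _ J_lt).
apply: eq_bigr => b _; rewrite level_sum -mulrA; congr (_ * _).
move: (M.-1) (prednK M_gt0) => m <-; rewrite subrXX; congr (_ * _).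
by apply: eq_bigr => u _; rewrite mulrC.
Qed.

End BestCodeword.

Section Mismatch.
Variables (R : archiRealFieldType) (I : finType) (s : {ffun I -> bool}).

Definition mismatch (c : {ffun I -> bool}) : {set I} := [set i | s i != c i].

Lemma sum_mismatch (G : {set I} -> R) : \sum_c G (mismatch c) = \sum_D G D.
Proof.
pose flip (D : {set I}) : {ffun I -> bool} := [ffun i => (i \in D) (+) s i].
have mismatchK : cancel flip mismatch.
  by move=> D; apply/setP => i; rewrite inE ffunE; case: (i \in D); case: (s i).
rewrite (reindex flip) /=; first by apply: eq_bigr => D _; rewrite mismatchK.
exists mismatch => [D _ | c _]; first exact: mismatchK.
by apply/ffunP => i; rewrite ffunE inE; case: (c i); case: (s i).
Qed.

Lemma sum_subsets_split (E : {set I}) (F : nat -> nat -> R) :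
  \sum_(D : {set I}) F #|D :&: E| #|D :\: E| =
  \sum_(a < #|E|.+1) \sum_(g < #|~: E|.+1) ('C(#|E|, a) * 'C(#|~: E|, g))%:R * F a g.
Proof.
transitivity (\sum_(A : {set I} | A \subset E)
                \sum_(B : {set I} | B \subset ~: E) F #|A| #|B|).
  rewrite pair_big_dep /= (reindex (fun D => (D :&: E, D :\: E))) /=; last first.
    exists (fun p => p.1 :|: p.2) => [D _ | [A B]]; first by rewrite /= setID.
    rewrite inE /= -disjoints_subset => /andP[sAE dBE].
    rewrite setIUl setDUl (setIidPl sAE) (disjoint_setI0 dBE) (setDidPl dBE) setU0.
    by rewrite (_ : A :\: E = set0) ?set0U //; apply/eqP; rewrite setD_eq0.
  by apply: eq_bigl => D; rewrite subsetIr /= setDE subsetIr.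
under eq_bigr do rewrite sum_subsets_card.
rewrite (sum_subsets_card E (fun a => \sum_(g < _) 'C(#|~: E|, g)%:R * F a g)).
apply: eq_bigr => a _; rewrite big_distrr; apply: eq_bigr => g _ /=.
by rewrite natrM mulrA.
Qed.

Lemma sum_mismatch_split (E : {set I}) (F : nat -> nat -> R) :
  \sum_c F #|mismatch c :&: E| #|mismatch c :\: E| =
  \sum_(a < #|E|.+1) \sum_(g < #|~: E|.+1) ('C(#|E|, a) * 'C(#|~: E|, g))%:R * F a g.
Proof. by rewrite (sum_mismatch (fun D => F #|D :&: E| #|D :\: E|)) sum_subsets_split. Qed.

End Mismatch.

Section Binomial.
Variable R : archiRealFieldType.

Lemma sum_ord_trunc (f : nat -> R) n N : (forall j, (n < j)%N -> f j = 0) ->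
  \sum_(j < N) f j = \sum_(j < n.+1) (j < N)%:R * f j.
Proof.
move=> f0; set Q := maxn N n.+1.
rewrite (big_ord_widen Q f (leq_maxl N n.+1)).
rewrite (big_ord_widen Q (fun j => (j < N)%:R * f j) (leq_maxr N n.+1)).
rewrite big_mkcond [RHS]big_mkcond /=; apply: eq_bigr => j _.
case: (ltnP j N) => h1; case: (ltnP j n.+1) => h2 //=; rewrite ?mul1r ?mul0r //.
by rewrite f0.
Qed.

Lemma binocdf_ord (m : int) n (p : R) :
  binocdf m n p = \sum_(j < n.+1) binopmf j n p * (j%:Z <= m)%R%:R.
Proof.
rewrite /binocdf; case: ifPn => [m_lt0|]; last rewrite -leNgt => m_ge0.
  by rewrite big1 // => j _; rewrite (_ : (_ <= m)%R = false) ?mulr0 //; lia.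
rewrite (@sum_ord_trunc (fun j => binopmf j n p) n) => [|j lt_nj]; last first.
  by rewrite /binopmf bin_small ?mul0r.
by apply: eq_bigr => j _; rewrite mulrC -{2}(gez0_abs m_ge0) lez_nat ltnS.
Qed.

Lemma binopmf_half j n : binopmf j n (1 / 2 : R) = 'C(n, j)%:R / (2 ^ n)%:R.
Proof.
rewrite /binopmf (_ : 1 - 1 / 2 = 1 / 2 :> R); last by lra.
have [le_jn|lt_nj] := leqP j n; last by rewrite bin_small // !mul0r.
by rewrite -mulrA -exprD subnKC // expr_div_n expr1n natrX mul1r.
Qed.

Lemma sum_binomial_nat (n : nat) : \sum_(i < n.+1) 'C(n, i)%:R = (2 ^ n)%:R :> R.
Proof.
rewrite natrX -[2%:R]/(1 + 1 : R) exprDn.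
by apply: eq_bigr => i _; rewrite !expr1n mul1r.
Qed.

Lemma one_sub_binocdf_half (m : int) n :
  1 - binocdf m n (1 / 2 : R) =
  \sum_(g < n.+1) 'C(n, g)%:R / (2 ^ n)%:R * (m < g%:Z)%R%:R.
Proof.
have sum1 : \sum_(g < n.+1) 'C(n, g)%:R / (2 ^ n)%:R = 1 :> R.
  by rewrite -big_distrl /= sum_binomial_nat divff // pnatr_eq0 expn_eq0.
rewrite binocdf_ord; under eq_bigr do rewrite binopmf_half.
rewrite -{1}sum1 -sumrB; apply: eq_bigr => g _.
rewrite -[X in X - _]mulr1 -mulrBr; congr (_ * _).
by case: leP; rewrite ?subrr ?subr0.
Qed.

End Binomial.

Section Code.
Variables (R : archiRealFieldType) (k M : nat) (ds dx : R).
Hypotheses (k_gt0 : (0 < k)%N) (M_gt0 : (0 < M)%N).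

Local Notation word := {ffun 'I_k -> bool}.
Local Notation xword := {ffun 'I_k -> xsym}.
Local Notation codebook := {ffun 'I_M -> word}.
Local Notation fs := (Num.floor (k%:R * ds)).
Local Notation fx := (Num.floor (k%:R * dx)).

Definition word_of (c : word) : xword := [ffun i => Some (c i)].

Definition xerrors (x : xword) (c : word) : nat := #|[set i | x i != word_of c i]|.

Definition erase (s : word) (E : {set 'I_k}) : xword :=
  [ffun i => if i \in E then None else Some (s i)].

Definition fails (s : word) (x : xword) (c : word) : bool :=
  (ds < dist_s R s c) || (dx < dist_x R x (word_of c)).

Definition nearest_encoder (C : codebook) (x : xword) (u : 'I_M) : R :=
  (u == best_index (xerrors x) M_gt0 C)%:R.

Definition codeword_decoder (C : codebook) (u : 'I_M) (zy : word * xword) : R :=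
  (zy == (C u, word_of (C u)))%:R.

Definition erasure_error (t : nat) : R :=
  \sum_(i < t.+1) binopmf i t (1 / 2) *
    (1 - binocdf (Num.min (fs - i%:Z) (fx - t%:Z)) (k - t) (1 / 2)) ^+ M.

Lemma xerrors_lt x c : (xerrors x c < k.+1)%N.
Proof. by rewrite ltnS; apply: leq_trans (max_card _) _; rewrite card_ord. Qed.

Lemma lt_dist_floor (d : R) n : (d < n%:R / k%:R) = (Num.floor (k%:R * d) < n%:Z).
Proof. by rewrite ltr_pdivlMr ?ltr0n // floor_lt_int mulrC -pmulrn. Qed.

Lemma nearest_encoder_is_encoder C : is_encoder (nearest_encoder C).
Proof.
move=> x; split=> [u|]; first exact: ler0n.
rewrite (bigD1 (best_index (xerrors x) M_gt0 C)) //= /nearest_encoder eqxx big1 ?addr0 //.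
by move=> u /negbTE ->.
Qed.

Lemma codeword_decoder_is_decoder C : is_decoder (codeword_decoder C).
Proof.
move=> u; split=> [zy|]; first exact: ler0n.
rewrite (bigD1 (C u, word_of (C u))) //= /codeword_decoder eqxx big1 ?addr0 //.
by move=> zy /negbTE ->.
Qed.

Lemma excess_prob_code delta C :
  excess_prob delta ds dx (nearest_encoder C) (codeword_decoder C) =
  \sum_s \sum_x efcf_pmf delta s x * (fails s x (C (best_index (xerrors x) M_gt0 C)))%:R.
Proof.
apply: eq_bigr => s _; apply: eq_bigr => x _.
set u0 := best_index _ _ C.
rewrite (bigD1 u0) //= [X in _ + X]big1 ?addr0 => [|u neq_u]; last first.
  by apply: big1 => zy _; rewrite /nearest_encoder (negbTE neq_u) mulr0 !mul0r.
rewrite (bigD1 (C u0, word_of (C u0))) //= [X in _ + X]big1 ?addr0 => [|zy neq_zy]; last first.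
  by rewrite /codeword_decoder (negbTE neq_zy) mulr0 mul0r.
by rewrite /nearest_encoder /codeword_decoder !eqxx !mulr1 /fails; case: ifP.
Qed.

Lemma sum_efcf_pmf_erase delta s (Q : xword -> R) :
  \sum_x efcf_pmf delta s x * Q x =
  \sum_(E : {set 'I_k}) efcf_pmf delta s (erase s E) * Q (erase s E).
Proof.
pose consistent (x : xword) := [forall i, (x i == None) || (x i == Some (s i))].
rewrite (bigID consistent) /= [X in _ + X]big1 ?addr0 => [|x]; last first.
  move=> /forallPn[i]; rewrite negb_or => /andP[not_erased not_s].
  rewrite /efcf_pmf (bigD1 i) //= /efcf_pmf1.
  move: not_erased not_s; case: (x i) => [b|] //= _ neq_b.
  by rewrite (_ : (b == s i) = false) ?mulr0 ?mul0r //; apply: contraNF neq_b => /eqP ->.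
rewrite (reindex (erase s)) /=; last first.
  exists (fun x => [set i | x i == None]) => [E _ | x].
    by apply/setP => i; rewrite inE ffunE; case: (i \in E).
  rewrite inE => /forallP consistent_x; apply/ffunP => i; rewrite ffunE inE.
  by move: (consistent_x i); case: (x i) => [b|] //= /eqP [->].
apply: eq_bigl => E; apply/forallP => i.
by rewrite ffunE; case: (i \in E); rewrite //= eqxx orbT.
Qed.

Lemma efcf_pmf_erase (delta : R) s E : efcf_pmf delta s (erase s E) =
  (1 / 2) ^+ k * (delta ^+ #|E| * (1 - delta) ^+ (k - #|E|)).
Proof.
rewrite /efcf_pmf big_split /= prodr_const card_ord; congr (_ * _).
rewrite (bigID (mem E)) /=; congr (_ * _).
  by rewrite (eq_bigr (fun=> delta)) ?prodr_const // => i E_i; rewrite ffunE E_i.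
rewrite (eq_bigl (mem (~: E))) => [|i]; last by rewrite !inE.
rewrite (eq_bigr (fun=> 1 - delta)) => [|i]; last first.
  by rewrite !inE ffunE => /negbTE -> /=; rewrite eqxx.
by rewrite prodr_const cardsC_sub card_ord.
Qed.

Section ErasurePattern.
Variables (s : word) (E : {set 'I_k}).
Local Notation t := #|E|.
Local Notation x := (erase s E).

Definition margin (a : nat) : int := Num.min (fs - a%:Z) (fx - t%:Z).

(* [count_ge] with an integer threshold, as thresholds built from [Num.floor] may be negative. *)
Definition count_at_least (z : int) : R := \sum_c (z <= (xerrors x c)%:Z)%R%:R.

Lemma card_erased_le : (t <= k)%N.
Proof. by apply: leq_trans (max_card _) _; rewrite card_ord. Qed.

Lemma xerrors_erase c : xerrors x c = (t + #|mismatch s c :\: E|)%N.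
Proof.
rewrite /xerrors -(cardsID E [set i | x i != word_of c i]); congr addn.
  by apply: eq_card => i; rewrite !inE !ffunE; case: (i \in E); rewrite ?andbT ?andbF.
by apply: eq_card => i; rewrite !inE !ffunE; case: (i \in E); rewrite ?andbF.
Qed.

Lemma fails_erase c :
  fails s x c = (margin #|mismatch s c :&: E| < #|mismatch s c :\: E|%:Z).
Proof.
rewrite /fails /dist_s /dist_x -/(mismatch s c) -(cardsID E (mismatch s c)).
rewrite -/(xerrors x c) xerrors_erase !lt_dist_floor /margin.
by rewrite gt_min !ltrBlDr -!PoszD [(_ + t)%N]addnC [(_ + #|_ :&: _|)%N]addnC.
Qed.

Lemma count_at_least_low z : z <= 0 -> count_at_least z = count_at_least 0.
Proof.
move=> z_le0; apply: eq_bigr => c _.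
by rewrite (_ : (z <= _)%R) 1?(_ : (0 <= _)%R) //; lia.
Qed.

Lemma count_at_least_high z : k.+1%:Z <= z -> count_at_least z = 0.
Proof.
move=> k_lt_z; apply: big1 => c _; have err_lt := xerrors_lt x c.
by rewrite (_ : (z <= _)%R = false) //; apply/negbTE; rewrite -ltNge; lia.
Qed.

Lemma count_ge_at_least b : count_ge R (xerrors x) b = count_at_least b%:Z.
Proof. by apply: eq_bigr => c _; rewrite lez_nat. Qed.

Lemma count_ge_at_leastS b : count_ge R (xerrors x) b.+1 = count_at_least (b%:Z + 1).
Proof.
apply: eq_bigr => c _.
by rewrite (_ : (b%:Z + 1 <= _)%R = (b < xerrors x c)%N) //; apply/idP/idP; lia.
Qed.

Lemma count_at_leastE z : count_at_least z =
  (2 ^ t)%:R * \sum_(g < (k - t).+1) 'C(k - t, g)%:R * (z <= (t + g)%:Z)%R%:R.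
Proof.
rewrite /count_at_least; under eq_bigr do rewrite xerrors_erase.
rewrite (sum_mismatch_split s E (fun _ g => (z <= (t + g)%:Z)%R%:R)) cardsC_sub card_ord.
rewrite -sum_binomial_nat big_distrl; apply: eq_bigr => a _ /=.
by rewrite big_distrr; apply: eq_bigr => g _ /=; rewrite natrM mulrA.
Qed.

Lemma count_at_least_cdf (m : int) :
  count_at_least (t%:Z + m + 1) = (2 ^ k)%:R * (1 - binocdf m (k - t) (1 / 2)).
Proof.
rewrite count_at_leastE one_sub_binocdf_half !big_distrr; apply: eq_bigr => g _ /=.
rewrite (_ : (t%:Z + m + 1 <= (t + g)%:Z)%R = (m < g%:Z)%R); last first.
  by apply/idP/idP; lia.
have -> : (2 ^ k)%:R = (2 ^ t)%:R * (2 ^ (k - t))%:R :> R.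
  by rewrite -natrM -expnD subnKC // card_erased_le.
have : (2 ^ (k - t))%:R != 0 :> R by rewrite pnatr_eq0 expn_eq0.
by move=> ?; field.
Qed.

Lemma count_ge_level b : count_ge R (xerrors x) b - count_ge R (xerrors x) b.+1 =
  (2 ^ t)%:R * \sum_(g < (k - t).+1) 'C(k - t, g)%:R * ((t + g)%N == b)%:R.
Proof.
rewrite /count_ge -sumrB; under eq_bigr do rewrite xerrors_erase.
rewrite (sum_mismatch_split s E (fun _ g => (b <= t + g)%:R - (b < t + g)%:R)).
rewrite cardsC_sub card_ord -sum_binomial_nat big_distrl; apply: eq_bigr => a _ /=.
rewrite big_distrr; apply: eq_bigr => g _ /=; rewrite natrM -mulrA; congr (_ * (_ * _)).
by rewrite leq_eqVlt eq_sym; case: eqP => [->|_] /=; rewrite ?ltnn ?subr0 ?subrr.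
Qed.

Lemma sum_level_fails b :
  \sum_c (xerrors x c == b)%:R * (fails s x c)%:R =
  (\sum_(a < t.+1) binopmf a t (1 / 2) * (t%:Z + margin a < b%:Z)%R%:R) *
    (count_ge R (xerrors x) b - count_ge R (xerrors x) b.+1).
Proof.
under eq_bigr do rewrite xerrors_erase fails_erase.
rewrite (sum_mismatch_split s E (fun a g => ((t + g)%N == b)%:R * (margin a < g%:Z)%R%:R)).
rewrite cardsC_sub card_ord count_ge_level big_distrl; apply: eq_bigr => a _ /=.
rewrite binopmf_half [RHS](_ : _ = 'C(t, a)%:R * (t%:Z + margin a < b%:Z)%R%:R *
    \sum_(g < (k - t).+1) 'C(k - t, g)%:R * ((t + g)%N == b)%:R); last first.
  by field; rewrite pnatr_eq0 expn_eq0.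
rewrite !big_distrr; apply: eq_bigr => g _ /=.
have [<-|_] := eqVneq (t + g)%N b; last by rewrite /= mulr0n !(mulr0, mul0r).
by rewrite PoszD ltrD2l /= mulr1n natrM; ring.
Qed.

Lemma sum_codebooks_fails :
  \sum_(C : codebook) (fails s x (C (best_index (xerrors x) M_gt0 C)))%:R =
  ((2 ^ k) ^ M)%:R * erasure_error t.
Proof.
rewrite (sum_best_codeword M_gt0 (xerrors_lt x) sum_level_fails).
under eq_bigr do rewrite count_ge_at_least count_ge_at_leastS big_distrl /=.
rewrite exchange_big /= /erasure_error big_distrr; apply: eq_bigr => a _ /=.
under eq_bigr do rewrite -mulrA.
rewrite -big_distrr /= (@telescope_above _ (fun z => count_at_least z ^+ M)) => [|z|z].
- by rewrite count_at_least_cdf exprMn -natrX mulrCA.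
- by move=> /count_at_least_low ->.
- by move=> /count_at_least_high ->; rewrite expr0n (negbTE (lt0n_neq0 M_gt0)).
Qed.

End ErasurePattern.

Lemma sum_excess_prob_codebooks (delta : R) :
  \sum_(C : codebook) excess_prob delta ds dx (nearest_encoder C) (codeword_decoder C) =
  #|{: codebook}|%:R * \sum_(t < k.+1) binopmf t k delta * erasure_error t.
Proof.
under eq_bigr do rewrite excess_prob_code.
rewrite exchange_big /=; under eq_bigr do rewrite exchange_big /=.
under eq_bigr do under eq_bigr do rewrite -big_distrr /=.
under eq_bigr do rewrite sum_efcf_pmf_erase.
under eq_bigr do under eq_bigr do rewrite efcf_pmf_erase sum_codebooks_fails.
under eq_bigr do rewrite (sum_sets_card _ (fun t =>
  (1 / 2) ^+ k * (delta ^+ t * (1 - delta) ^+ (k - t)) * (((2 ^ k) ^ M)%:R * erasure_error t))).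
have card_word : #|{: word}| = (2 ^ k)%N by rewrite card_ffun card_bool card_ord.
have -> : #|{: codebook}| = ((2 ^ k) ^ M)%N by rewrite card_ffun card_word card_ord.
rewrite sumr_const (_ : #|_| = 2 ^ k)%N; last by rewrite -card_word; apply: eq_card.
rewrite card_ord -[_ *+ 2 ^ k]mulr_natl !big_distrr; apply: eq_bigr => t _ /=.
have half_k : (2 ^ k)%:R * (1 / 2 : R) ^+ k = 1.
  by rewrite natrX -exprMn mul1r mulfV ?expr1n // pnatr_eq0.
transitivity ((2 ^ k)%:R * (1 / 2 : R) ^+ k *
  (((2 ^ k) ^ M)%:R * (binopmf t k delta * erasure_error t))); last by rewrite half_k mul1r.
by rewrite /binopmf; ring.
Qed.

End Code.

Theorem theorem7 (R : archiRealFieldType) (delta ds dx : R)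
  (hdelta0 : 0 <= delta) (hdelta1 : delta <= 1)
  (hreg : region_D2 delta ds dx \/ region_D3 delta ds dx)
  (k M : nat) (hk : (0 < k)%N) (hM : (0 < M)%N) :
  is_code k M delta ds dx
    (\sum_(t < k.+1) binopmf t k delta *
       \sum_(i < t.+1) binopmf i t (1 / 2) *
         (1 - binocdf (Num.min (Num.floor (k%:R * ds) - i%:Z)
                               (Num.floor (k%:R * dx) - t%:Z)) (k - t) (1 / 2)) ^+ M).
Proof.
pose C0 : {ffun 'I_M -> {ffun 'I_k -> bool}} := [ffun=> [ffun=> false]].
have [C le_C] := exists_le_mean C0 (sum_excess_prob_codebooks ds dx hk hM delta).
exists (nearest_encoder R hM C), (codeword_decoder R C); split=> //.
  exact: nearest_encoder_is_encoder.
exact: codeword_decoder_is_decoder.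
Qed.
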